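(* Let $G,H$ be groups, $\tau\in\mathrm{CA}(A^G)$, $\phi\in\mathrm{Hom}(H,G)$, and suppose $\mathcal{T}:=\phi^*\circ\tau$ is non-constant. If $\psi\in\mathrm{Hom}(H,G)$ is such that the difference set $\Delta(\phi,\psi)$ is infinite, then $\mathcal{T}\neq\psi^*\circ\tau$.
   Context: $A$ is a finite set with $|A|\ge 2$. $A^G$ is the set of functions $G\to A$ with shift action $(g\cdot x)(k):=x(g^{-1}k)$. $\mathrm{CA}(A^G)$ is the set of maps $\tau:A^G\to A^G$ for which there exist finite $T\subseteq G$ and $\mu:A^T\to A$ with $\tau(x)(g)=\mu((g^{-1}\cdot x)|_T)$ for all $x,g$. For $\phi\in\mathrm{Hom}(H,G)$, $\phi^*:A^G\to A^H$ is $\phi^*(x):=x\circ\phi$. For $\phi,\psi\in\mathrm{Hom}(H,G)$, $\Delta(\phi,\psi):=\{\psi(h)^{-1}\phi(h):h\in H\}\subseteq G$. *)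

From Stdlib Require List.
From mathcomp Require Import all_boot.
Set Implicit Arguments.
Unset Strict Implicit.
Unset Printing Implicit Defensive.

Record group := Group {
  gcar :> Type;
  gmul : gcar -> gcar -> gcar;
  gone : gcar;
  ginv : gcar -> gcar;
  gmulA : forall x y z, gmul x (gmul y z) = gmul (gmul x y) z;
  gmul1x : forall x, gmul gone x = x;
  gmulx1 : forall x, gmul x gone = x;
  gmulVx : forall x, gmul (ginv x) x = gone;
  gmulxV : forall x, gmul x (ginv x) = gone
}.

Definition is_hom (H G : group) (phi : H -> G) : Prop :=
  forall h1 h2 : H, phi (gmul h1 h2) = gmul (phi h1) (phi h2).

Definition shift (A : Type) (G : group) (g : G) (x : G -> A) : G -> A :=
  fun k => x (gmul (ginv g) k).

Definition restrict (A : Type) (G : group) (T : list G) (x : G -> A)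
  : {k : G | List.In k T} -> A :=
  fun k => x (proj1_sig k).

Definition is_CA (A : Type) (G : group) (tau : (G -> A) -> (G -> A)) : Prop :=
  exists (T : list G) (mu : ({k : G | List.In k T} -> A) -> A),
    forall (x : G -> A) (g : G), tau x g = mu (@restrict A G T (@shift A G (ginv g) x)).

Definition pullback (A : Type) (H G : group) (phi : H -> G) (x : G -> A) : H -> A :=
  fun h => x (phi h).

Definition Delta (H G : group) (phi psi : H -> G) : G -> Prop :=
  fun g => exists h : H, g = gmul (ginv (psi h)) (phi h).

Definition finite_set (T : Type) (S : T -> Prop) : Prop :=
  exists l : list T, forall t, S t -> List.In t l.

From mathcomp Require Import all_boot.
From Stdlib Require Import Classical ClassicalEpsilon FunctionalExtensionality.
From Stdlib Require List.

Set Implicit Arguments.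
Unset Strict Implicit.
Unset Printing Implicit Defensive.

(* Let T be a memory set of tau.  Since phi^* o tau is not
   constant there are configurations x, y and a point h0 of H with
   tau x (phi h0) <> tau y (phi h0).  As Delta(phi, psi) is infinite it is
   not contained in the finite set T T^{-1}, so some h in H has
   psi(h)^{-1} phi(h) outside T T^{-1}; equivalently the windows
   phi(h) T and psi(h) T are disjoint.  Hence one configuration z can look
   like (a translate of) x on phi(h) T and like y on psi(h) T.  By locality
   and shift-equivariance of tau, tau z (phi h) = tau x (phi h0) and
   tau z (psi h) = tau y (phi h0), so phi^* (tau z) and psi^* (tau z)
   differ at h. *)

Section GroupFacts.
Variable G : group.

Lemma ginvK (a : G) : ginv (ginv a) = a.
Proof.
transitivity (gmul (ginv (ginv a)) (gmul (ginv a) a)).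
  by rewrite gmulVx gmulx1.
by rewrite gmulA gmulVx gmul1x.
Qed.

Lemma gmulKV (a k : G) : gmul (ginv a) (gmul a k) = k.
Proof. by rewrite gmulA gmulVx gmul1x. Qed.

Lemma meet_translates (a b k t : G) :
  gmul b k = gmul a t -> gmul (ginv b) a = gmul k (ginv t).
Proof.
move=> E; rewrite -[gmul (ginv b) a]gmulx1 -(gmulxV t) !gmulA.
by rewrite -(gmulA (ginv b) a t) -E gmulKV.
Qed.

Definition diff_list (T : list G) : list G :=
  List.flat_map (fun k => List.map (fun t => gmul k (ginv t)) T) T.

Lemma in_diff_list (T : list G) (k t : G) :
  List.In k T -> List.In t T -> List.In (gmul k (ginv t)) (diff_list T).
Proof.
move=> Hk Ht; apply/List.in_flat_map; exists k; split => //.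
by apply/List.in_map_iff; exists t.
Qed.

Lemma translates_disjoint (T : list G) (a b k t : G) :
  ~ List.In (gmul (ginv b) a) (diff_list T) ->
  List.In k T -> List.In t T -> gmul b k <> gmul a t.
Proof. by move=> Hd Hk Ht /meet_translates E; apply: Hd; rewrite E; apply: in_diff_list. Qed.

End GroupFacts.

Lemma CA_window (A : Type) (G : group) (tau : (G -> A) -> (G -> A)) :
  is_CA tau ->
  exists T : list G, forall (x x' : G -> A) (g g' : G),
    (forall k, List.In k T -> x (gmul g k) = x' (gmul g' k)) -> tau x g = tau x' g'.
Proof.
move=> [T [mu Hmu]]; exists T => x x' g g' Hxx'.
rewrite !Hmu; congr mu; apply: functional_extensionality => -[k Hk].
by rewrite /restrict /shift /= !ginvK Hxx'.
Qed.

Lemma fun_neq_point (X Y : Type) (f g : X -> Y) :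
  f <> g -> exists t, f t <> g t.
Proof.
move=> Hfg; apply: NNPP => Hn; apply: Hfg; apply: functional_extensionality => t.
by apply: NNPP => Ht; apply: Hn; exists t.
Qed.

Lemma infinite_avoids_list (X : Type) (S : X -> Prop) (l : list X) :
  ~ finite_set S -> exists d, S d /\ ~ List.In d l.
Proof.
move=> Hinf; apply: NNPP => Hn; apply: Hinf; exists l => d Hd.
by apply: NNPP => Hdl; apply: Hn; exists d.
Qed.

Definition patch (X A : Type) (S : X -> Prop) (x y : X -> A) : X -> A :=
  fun g => if excluded_middle_informative (S g) then x g else y g.

Lemma patch_in (X A : Type) (S : X -> Prop) (x y : X -> A) (g : X) :
  S g -> patch S x y g = x g.
Proof. by rewrite /patch; case: excluded_middle_informative. Qed.

Lemma patch_out (X A : Type) (S : X -> Prop) (x y : X -> A) (g : X) :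
  ~ S g -> patch S x y g = y g.
Proof. by rewrite /patch; case: excluded_middle_informative. Qed.

Theorem theorem3p9 (A : finType) (G H : group)
    (tau : (G -> A) -> (G -> A)) (phi psi : H -> G) :
  1 < #|A| ->
  is_CA tau ->
  is_hom phi ->
  (exists x y : G -> A, pullback phi (tau x) <> pullback phi (tau y)) ->
  is_hom psi ->
  ~ finite_set (Delta phi psi) ->
  (fun x => pullback phi (tau x)) <> (fun x => pullback psi (tau x)).
Proof.
move=> _ /CA_window [T HT] _ [x [y Hxy]] _ Hinf Heq.
have [h0 Hh0] := fun_neq_point Hxy.
have [_ [[h ->] Hd]] := infinite_avoids_list (diff_list T) Hinf.
set a := phi h; set b := psi h.
(* z is x translated to the window a T, and y translated elsewhere. *)
pose window g := exists t, List.In t T /\ g = gmul a t.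
pose z := patch window (fun g => x (gmul (phi h0) (gmul (ginv a) g)))
                       (fun g => y (gmul (phi h0) (gmul (ginv b) g))).
have z_at_a : tau z a = tau x (phi h0).
  by apply: HT => k Hk; rewrite /z patch_in ?gmulKV //; exists k.
have z_at_b : tau z b = tau y (phi h0).
  apply: HT => k Hk; rewrite /z patch_out ?gmulKV // => -[t [Ht Ebt]].
  exact: (translates_disjoint Hd Hk Ht Ebt).
by apply: Hh0; rewrite /pullback -z_at_a -z_at_b; apply: (f_equal (fun F => F z h) Heq).
Qed.
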